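(* Let $p\in\mathbb{N}_0$, $\eta>0$ and $\theta\in\mathbb{R}$, and write $x=\cosh\eta$. Then \begin{align*} (\cosh\eta-\cos\theta)^p\log(\cosh\eta-\cos\theta) &=(\eta-\log 2)(\cosh\eta-\cos\theta)^p\\ &\quad+2\sum_{n=0}^{p}\cos(n\theta)\,e^{-n\eta}\sum_{k=-p}^{n-1}\frac{(-1)^{k+1}e^{k\eta}R_p^k(x)}{n-k}\\ &\quad-2\sum_{n=1}^{p-1}\cos(n\theta)\,e^{n\eta}\sum_{k=-p}^{-n-1}\frac{(-1)^{k+1}e^{k\eta}R_p^k(x)}{n+k}\\ &\quad+2\sum_{n=p+1}^{\infty}\cos(n\theta)\,e^{-n\eta}\sum_{k=-p}^{p}\frac{(-1)^{k+1}e^{k\eta}R_p^k(x)}{n-k}. \end{align*}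
   Context: $\log$ denotes the natural logarithm. The logarithmic polynomials $R_p^k(x)$, for $p\in\mathbb{N}_0$ and $k\in\mathbb{Z}$, are defined by $R_0^0(x)=1$, $R_0^k(x)=0$ for $k\neq 0$, and the recurrence $R_p^k(x)=\tfrac12 R_{p-1}^{k-1}(x)+xR_{p-1}^k(x)+\tfrac12 R_{p-1}^{k+1}(x)$ for $p\ge 1$ (so $R_p^k=0$ unless $-p\le k\le p$). Empty sums (upper limit smaller than lower limit) are zero. *)

From Stdlib Require Import Reals ZArith List.
From Coquelicot Require Import Coquelicot.
Open Scope R_scope.

Fixpoint logpoly (p : nat) (k : Z) (x : R) : R :=
  match p with
  | O => if Z.eqb k 0 then 1 else 0
  | S q => / 2 * logpoly q (k - 1) x + x * logpoly q k x + / 2 * logpoly q (k + 1) x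
  end.

(* zsum a b f = sum_{k=a}^{b} f k over integers; empty (= 0) when b < a. *)
Definition zsum (a b : Z) (f : Z -> R) : R :=
  fold_right Rplus 0
    (map (fun i : nat => f (a + Z.of_nat i)%Z) (seq 0 (Z.to_nat (b - a + 1)))).

Definition zsign (k : Z) : R := if Z.even k then 1 else -1.

(* Put q = e^(-eta).  Then cosh eta - cos theta = e^eta (1 - 2 q cos theta + q^2) / 2 and
   ln (1 - 2 q cos theta + q^2) = -2 sum_(m >= 1) q^m cos (m theta) / m.  The recurrence
   defining R_p^k is exactly what makes
     (x - cos theta)^p cos phi = sum_(|k| <= p) (-1)^k R_p^k(x) cos (phi + k theta),
   so (cosh eta - cos theta)^p ln (1 - 2 q cos theta + q^2) is a double series over
   |k| <= p and m >= 1.  Collecting its terms by n = k + m, those with n > p form the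
   stated series, while the finitely many with n <= p give the two finite sums, the
   ones with n < 0 being folded onto -n by cos (-n theta) = cos (n theta). *)

From Stdlib Require Import Reals ZArith List Lra Lia.
From Coquelicot Require Import Coquelicot.
Open Scope R_scope.

Lemma fold_right_Rplus_acc (l : list R) (y : R) :
  fold_right Rplus y l = fold_right Rplus 0 l + y.
Proof. induction l as [|r l IH]; simpl; [ring | rewrite IH; ring]. Qed.

Lemma zsum_empty a b f : (b < a)%Z -> zsum a b f = 0.
Proof. intro Hab. unfold zsum. replace (Z.to_nat (b - a + 1)) with 0%nat by lia. reflexivity. Qed.

Lemma zsum_snoc a b f : (a <= b + 1)%Z -> zsum a (b + 1) f = zsum a b f + f (b + 1)%Z.
Proof.
  intro Hab. unfold zsum.
  replace (Z.to_nat (b + 1 - a + 1)) with (S (Z.to_nat (b - a + 1))) by lia.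
  rewrite seq_S, map_app, fold_right_app, fold_right_Rplus_acc. simpl.
  replace (a + Z.of_nat (Z.to_nat (b - a + 1)))%Z with (b + 1)%Z by lia.
  ring.
Qed.

Lemma Z_ind_from (a : Z) (P : Z -> Prop) :
  (forall b, (b < a)%Z -> P b) ->
  (forall b, (a <= b + 1)%Z -> P b -> P (b + 1)%Z) ->
  forall b, P b.
Proof.
  intros Hbase Hstep b.
  destruct (Z_lt_le_dec b a) as [Hb | Hb]; [now apply Hbase |].
  replace b with (a - 1 + Z.of_nat (Z.to_nat (b - a + 1)))%Z by lia.
  induction (Z.to_nat (b - a + 1)) as [|n IH].
  - apply Hbase. lia.
  - rewrite Nat2Z.inj_succ, <- Z.add_1_r, Z.add_assoc. apply Hstep; [lia | exact IH].
Qed.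

Lemma zsum_ext a b f g :
  (forall k, (a <= k <= b)%Z -> f k = g k) -> zsum a b f = zsum a b g.
Proof.
  induction b as [b Hb | b Hb IH] using (Z_ind_from a).
  - intros _. rewrite !zsum_empty by lia. reflexivity.
  - intros Hfg. rewrite !zsum_snoc, Hfg by lia.
    rewrite IH by (intros; apply Hfg; lia). reflexivity.
Qed.

Lemma zsum_eq0 a b f : (forall k, (a <= k <= b)%Z -> f k = 0) -> zsum a b f = 0.
Proof.
  induction b as [b Hb | b Hb IH] using (Z_ind_from a).
  - intros _. now apply zsum_empty.
  - intros Hf. rewrite zsum_snoc, Hf by lia.
    rewrite IH by (intros; apply Hf; lia). ring.
Qed.

Lemma zsum_plus a b f g : zsum a b (fun k => f k + g k) = zsum a b f + zsum a b g.
Proof.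
  induction b as [b Hb | b Hb IH] using (Z_ind_from a).
  - rewrite !zsum_empty by lia. ring.
  - rewrite !zsum_snoc, IH by lia. ring.
Qed.

Lemma zsum_scal a b c f : zsum a b (fun k => c * f k) = c * zsum a b f.
Proof.
  induction b as [b Hb | b Hb IH] using (Z_ind_from a).
  - rewrite !zsum_empty by lia. ring.
  - rewrite !zsum_snoc, IH by lia. ring.
Qed.

Lemma zsum_opp a b f : zsum a b (fun k => - f k) = - zsum a b f.
Proof.
  rewrite <- (Rmult_1_l (zsum a b f)), Ropp_mult_distr_l, <- zsum_scal.
  apply zsum_ext. intros; ring.
Qed.

Lemma zsum_split a b c f : (a - 1 <= b <= c)%Z ->
  zsum a c f = zsum a b f + zsum (b + 1) c f.
Proof.
  induction c as [c Hc | c Hc IH] using (Z_ind_from (b + 1)); intros Hb.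
  - replace c with b by lia. rewrite (zsum_empty (b + 1)) by lia. ring.
  - rewrite !zsum_snoc, IH by lia. ring.
Qed.

Lemma zsum_cons a b f : (a <= b)%Z -> zsum a b f = f a + zsum (a + 1) b f.
Proof.
  intros Hab. rewrite (zsum_split a a) by lia. f_equal.
  replace (zsum a a f) with (zsum a (a - 1 + 1) f) by (f_equal; ring).
  rewrite zsum_snoc, zsum_empty by lia. rewrite Z.sub_add. ring.
Qed.

Lemma zsum_drop_last a b f : f b = 0 -> zsum a b f = zsum a (b - 1) f.
Proof.
  intros Hf. destruct (Z_lt_le_dec b a).
  - rewrite !zsum_empty by lia. reflexivity.
  - replace b with (b - 1 + 1)%Z at 1 by ring.
    rewrite zsum_snoc by lia. replace (b - 1 + 1)%Z with b by ring. rewrite Hf. ring.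
Qed.

Lemma zsum_widen a b a' b' f : (a' <= a)%Z -> (b <= b')%Z -> (a <= b + 1)%Z ->
  (forall k, (k < a \/ b < k)%Z -> f k = 0) -> zsum a' b' f = zsum a b f.
Proof.
  intros Ha Hb Hab Hf.
  rewrite (zsum_split a' (a - 1)), Z.sub_add, (zsum_split a b b') by lia.
  rewrite (zsum_eq0 a'), (zsum_eq0 (b + 1)); [ring | |]; intros k Hk; apply Hf; lia.
Qed.

Lemma zsum_shift a b d f : zsum a b (fun k => f (k + d)%Z) = zsum (a + d) (b + d) f.
Proof.
  unfold zsum. replace (b + d - (a + d) + 1)%Z with (b - a + 1)%Z by ring.
  f_equal. apply map_ext. intro i. f_equal. ring.
Qed.

Lemma zsum_reflect a b f : zsum a b (fun n => f (- n)%Z) = zsum (- b) (- a) f.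
Proof.
  induction b as [b Hb | b Hb IH] using (Z_ind_from a).
  - rewrite !zsum_empty by lia. reflexivity.
  - rewrite zsum_snoc, IH, (zsum_cons (- (b + 1))) by lia.
    replace (- (b + 1) + 1)%Z with (- b)%Z by ring. ring.
Qed.

Lemma zsum_triangle a b (F : Z -> Z -> R) :
  zsum a b (fun k => zsum (k + 1) b (F k)) =
  zsum a b (fun n => zsum a (n - 1) (fun k => F k n)).
Proof.
  induction b as [b Hb | b Hb IH] using (Z_ind_from a).
  - rewrite !zsum_empty by lia. reflexivity.
  - rewrite !(zsum_snoc a b), (zsum_empty (b + 1 + 1)) by lia.
    rewrite (zsum_ext a b (fun k => zsum (k + 1) (b + 1) (F k))
               (fun k => zsum (k + 1) b (F k) + F k (b + 1)%Z))
      by (intros k Hk; apply zsum_snoc; lia).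
    rewrite zsum_plus, IH. replace (b + 1 - 1)%Z with b by ring. ring.
Qed.

Lemma is_series_ext_R (a b : nat -> R) (la lb : R) :
  (forall n, a n = b n) -> la = lb -> is_series a la -> is_series b lb.
Proof. intros Hab <-; apply is_series_ext, Hab. Qed.

Lemma is_series_Rscal c (a : nat -> R) (l : R) :
  is_series a l -> is_series (fun n => c * a n) (c * l).
Proof. exact (is_series_scal c a l). Qed.

Lemma is_series_Rminus (a b : nat -> R) (la lb : R) :
  is_series a la -> is_series b lb -> is_series (fun n => a n - b n) (la - lb).
Proof. exact (is_series_minus a b la lb). Qed.

Lemma is_series_R0 : is_series (fun _ : nat => 0) 0.
Proof.
  pose proof (is_series_Rscal 0 _ _ (is_series_geom 0 ltac:(rewrite Rabs_R0; lra))) as H.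
  revert H; apply is_series_ext_R; intros; apply Rmult_0_l.
Qed.

Lemma is_series_shift1 (a : nat -> R) (l : R) :
  is_series a l -> is_series (fun n => a (S n)) (l - a 0%nat).
Proof.
  intro Ha. apply is_series_incr_1.
  revert Ha; apply is_series_ext_R; [reflexivity |].
  change plus with Rplus. ring.
Qed.

Lemma is_series_zsum a b (U : Z -> nat -> R) (s : Z -> R) :
  (forall k, (a <= k <= b)%Z -> is_series (U k) (s k)) ->
  is_series (fun m => zsum a b (fun k => U k m)) (zsum a b s).
Proof.
  induction b as [b Hb | b Hb IH] using (Z_ind_from a); intros HU.
  - apply (is_series_ext_R (fun _ => 0) _ 0); [| | exact is_series_R0];
      intros; rewrite zsum_empty by lia; reflexivity.
  - assert (H := is_series_plus _ _ _ _ (IH ltac:(intros k Hk; apply HU; lia))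
                   (HU (b + 1)%Z ltac:(lia))).
    revert H; apply is_series_ext_R; intros; rewrite zsum_snoc by lia; reflexivity.
Qed.

Lemma is_series_tail (f : Z -> R) a b (l : R) : (a <= b + 1)%Z ->
  is_series (fun m => f (a + Z.of_nat m)%Z) l ->
  is_series (fun m => f (b + 1 + Z.of_nat m)%Z) (l - zsum a b f).
Proof.
  induction b as [b Hb | b Hb IH] using (Z_ind_from a); intros Hab Hf.
  - replace (b + 1)%Z with a by lia. rewrite zsum_empty by lia.
    rewrite Rminus_0_r. exact Hf.
  - refine (is_series_ext_R _ _ _ _ _ _ (is_series_shift1 _ _ (IH ltac:(lia) Hf))).
    + intro m. f_equal. lia.
    + rewrite zsum_snoc, Z.add_0_r by lia. ring.
Qed.

Lemma zsign_succ k : zsign (k + 1) = - zsign k.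
Proof. unfold zsign. rewrite Z.even_add. destruct (Z.even k); simpl; ring. Qed.

Lemma zsign_pred k : zsign (k - 1) = - zsign k.
Proof. rewrite <- (Z.sub_add 1 k) at 2. rewrite zsign_succ. ring. Qed.

Lemma logpoly_out p k x : (Z.of_nat p < Z.abs k)%Z -> logpoly p k x = 0.
Proof.
  revert k; induction p as [|p IH]; intros k Hk; simpl.
  - destruct (Z.eqb_spec k 0); [lia | reflexivity].
  - rewrite !IH by lia. ring.
Qed.

Lemma sub_cos_mul_zsum_cos (f : Z -> R) a b x th phi :
  (a <= b + 1)%Z -> (forall k, (k < a \/ b < k)%Z -> f k = 0) ->
  (x - cos th) * zsum a b (fun k => f k * cos (phi + IZR k * th)) =
  zsum (a - 1) (b + 1) (fun k =>
    (x * f k - / 2 * f (k - 1)%Z - / 2 * f (k + 1)%Z) * cos (phi + IZR k * th)).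
Proof.
  intros Hab Hf.
  set (c := fun k => cos (phi + IZR k * th)).
  rewrite (zsum_ext (a - 1) (b + 1) _ (fun k =>
      x * (f k * c k) + - / 2 * (f (k + -1)%Z * c (k + -1 + 1)%Z)
      + - / 2 * (f (k + 1)%Z * c (k + 1 + -1)%Z)))
    by (intros k _; unfold c; replace (k + -1 + 1)%Z with k by ring;
        replace (k + 1 + -1)%Z with k by ring; replace (k + -1)%Z with (k - 1)%Z by ring;
        ring).
  rewrite !zsum_plus, !zsum_scal.
  rewrite (zsum_shift (a - 1) (b + 1) (-1) (fun j => f j * c (j + 1)%Z)),
          (zsum_shift (a - 1) (b + 1) 1 (fun j => f j * c (j + -1)%Z)).
  rewrite (zsum_widen a b (a - 1) (b + 1)), (zsum_widen a b (a - 1 + -1) (b + 1 + -1)),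
    (zsum_widen a b (a - 1 + 1) (b + 1 + 1))
    by (lia || (intros k Hk; rewrite Hf by lia; ring)).
  assert (Hneighbours :
    zsum a b (fun j => f j * c (j + 1)%Z) + zsum a b (fun j => f j * c (j + -1)%Z)
    = 2 * cos th * zsum a b (fun j => f j * c j)).
  { rewrite <- zsum_plus, <- zsum_scal. apply zsum_ext. intros k _. unfold c.
    rewrite !plus_IZR.
    replace (phi + (IZR k + 1) * th) with (phi + IZR k * th + th) by ring.
    replace (phi + (IZR k + -1) * th) with (phi + IZR k * th - th) by ring.
    rewrite cos_plus, cos_minus. ring. }
  unfold c in *. lra.
Qed.

Lemma pow_sub_cos_mul_cos p x th phi :
  (x - cos th) ^ p * cos phi =
  zsum (- Z.of_nat p) (Z.of_nat p) (fun k => zsign k * logpoly p k x * cos (phi + IZR k * th)).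
Proof.
  induction p as [|p IH].
  - unfold zsum, zsign; simpl. rewrite Rmult_0_l, !Rplus_0_r. ring.
  - rewrite <- tech_pow_Rmult, Rmult_assoc, IH, sub_cos_mul_zsum_cos.
    + rewrite Nat2Z.inj_succ, <- Z.add_1_r, Z.opp_add_distr, <- Z.add_opp_r.
      apply zsum_ext. intros k _. cbn [logpoly].
      rewrite zsign_pred, zsign_succ. ring.
    + lia.
    + intros k Hk. rewrite logpoly_out by lia. ring.
Qed.

Lemma Rabs_cos_div_INR y n : Rabs (cos y / INR n) <= 1.
Proof.
  destruct n as [|m].
  - rewrite Rdiv_0_r, Rabs_R0. lra.
  - assert (Hm : 1 <= INR (S m)) by (rewrite S_INR; pose proof (pos_INR m); lra).
    unfold Rdiv. rewrite Rabs_mult, (Rabs_right (/ _))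
      by (apply Rle_ge, Rlt_le, Rinv_0_lt_compat; lra).
    assert (Hc : Rabs (cos y) <= 1) by (apply Rabs_le, COS_bound).
    assert (Hi : 0 < / INR (S m) <= 1).
    { split; [apply Rinv_0_lt_compat; lra |].
      rewrite <- Rinv_1. apply Rinv_le_contravar; lra. }
    pose proof (Rabs_pos (cos y)). nra.
Qed.

Lemma ex_series_bounded_geom (b : nat -> R) t :
  (forall n, Rabs (b n) <= 1) -> Rabs t < 1 -> ex_series (fun n => b n * t ^ n).
Proof.
  intros Hb Ht.
  apply (@ex_series_le R_AbsRing R_CompleteNormedModule) with (fun n => Rabs t ^ n).
  - intro n. change norm with Rabs. rewrite Rabs_mult, <- RPow_abs.
    pose proof (pow_le _ n (Rabs_pos t)). pose proof (Hb n).
    pose proof (Rabs_pos (b n)). nra.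
  - apply ex_series_geom. rewrite Rabs_Rabsolu. exact Ht.
Qed.

Definition cos_quad (th t : R) : R := 1 - 2 * t * cos th + t ^ 2.

Lemma cos_quad_pos th t : Rabs t < 1 -> 0 < cos_quad th t.
Proof.
  intro Ht. unfold cos_quad.
  pose proof (COS_bound th). pose proof (Rabs_pos t).
  assert (Hct : t * cos th <= Rabs t).
  { unfold Rabs; destruct (Rcase_abs t); nra. }
  assert (t ^ 2 = Rabs t ^ 2) by (unfold Rabs; destruct (Rcase_abs t); ring).
  nra.
Qed.

Lemma cos_chebyshev th n :
  cos (INR (S (S n)) * th) = 2 * cos th * cos (INR (S n) * th) - cos (INR n * th).
Proof.
  rewrite !S_INR.
  replace ((INR n + 1 + 1) * th) with ((INR n + 1) * th + th) by ring.
  replace (INR n * th) with ((INR n + 1) * th - th) by ring.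
  rewrite cos_plus, cos_minus. ring.
Qed.

(* Two index shifts of the series reproduce it through the Chebyshev recurrence,
   which yields a linear equation for its sum. *)
Lemma is_series_cos_geom th t : Rabs t < 1 ->
  is_series (fun n => cos (INR (S n) * th) * t ^ n) ((cos th - t) / cos_quad th t).
Proof.
  intro Ht.
  set (u := fun n => cos (INR (S n) * th) * t ^ n).
  destruct (ex_series_bounded_geom (fun n => cos (INR (S n) * th)) t
              (fun n => Rabs_le _ _ (COS_bound _)) Ht) as [s Hs].
  change R in s.
  assert (Hshift2 := is_series_shift1 _ _ (is_series_shift1 _ _ Hs)).
  assert (Hrec : is_series (fun n => u (S (S n))) (2 * cos th * t * (s - u 0%nat) - t ^ 2 * s)).
  { assert (H := is_series_Rminus _ _ _ _
                   (is_series_Rscal (2 * cos th * t) _ _ (is_series_shift1 _ _ Hs))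
                   (is_series_Rscal (t ^ 2) _ _ Hs)).
    revert H; apply is_series_ext_R; [| reflexivity].
    intro n. unfold u. rewrite (cos_chebyshev th (S n)). simpl. ring. }
  assert (Hs' : s - u 0%nat - u 1%nat = 2 * cos th * t * (s - u 0%nat) - t ^ 2 * s).
  { transitivity (Series (fun n => u (S (S n)))).
    - symmetry. apply is_series_unique. exact Hshift2.
    - apply is_series_unique. exact Hrec. }
  assert (Hq := cos_quad_pos th t Ht).
  replace ((cos th - t) / cos_quad th t) with s; [exact Hs |].
  unfold u in Hs'. simpl in Hs'.
  replace ((1 + 1) * th) with (2 * th) in Hs' by ring. rewrite cos_2a_cos in Hs'.
  rewrite Rmult_1_l in Hs'. unfold cos_quad in *. field_simplify_eq; [nra | lra].
Qed.

(* [cos_coef th 0 = 0] because Rocq's [/ 0] is [0]. *)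
Definition cos_coef (th : R) (n : nat) : R := cos (INR n * th) / INR n.

Lemma cos_coef_0 th : cos_coef th 0 = 0.
Proof. apply Rdiv_0_r. Qed.

Lemma cos_coef_in_radius th t : Rabs t < 1 -> Rbar_lt (Rabs t) (CV_radius (cos_coef th)).
Proof.
  intro Ht.
  assert (H1 : Rbar_le 1 (CV_radius (cos_coef th))).
  { apply (proj1 (CV_radius_bounded (cos_coef th))).
    exists 1. intro n. rewrite pow1, Rmult_1_r. apply Rabs_cos_div_INR. }
  destruct (CV_radius (cos_coef th)); simpl in *; lra || exact I.
Qed.

Lemma PSeries_derive_cos_coef th t : Rabs t < 1 ->
  PSeries (PS_derive (cos_coef th)) t = (cos th - t) / cos_quad th t.
Proof.
  intro Ht. apply is_series_unique.
  apply (is_series_ext_R (fun n => cos (INR (S n) * th) * t ^ n) _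
           ((cos th - t) / cos_quad th t)); [| reflexivity | apply is_series_cos_geom, Ht].
  intro n. unfold PS_derive, cos_coef. change scal with Rmult.
  field. apply not_0_INR. lia.
Qed.

Lemma is_derive_ln_cos_quad th t : Rabs t < 1 ->
  is_derive (fun t => ln (cos_quad th t) + 2 * PSeries (cos_coef th) t) t 0.
Proof.
  intro Ht. pose proof (cos_quad_pos th t Ht) as Hq.
  assert (Hln : is_derive (fun t => ln (cos_quad th t)) t
                  ((- 2 * cos th + 2 * t) / cos_quad th t)).
  { unfold cos_quad in *. auto_derive; [lra | field; lra]. }
  assert (Hps := is_derive_PSeries (cos_coef th) t (cos_coef_in_radius th t Ht)).
  rewrite PSeries_derive_cos_coef in Hps by exact Ht.
  assert (H := is_derive_plus _ _ _ _ _ Hln (is_derive_scal _ _ 2 _ Hps)).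
  assert (Hzero : (- 2 * cos th + 2 * t) / cos_quad th t
                  + 2 * ((cos th - t) / cos_quad th t) = 0) by (field; lra).
  change plus with Rplus in H. change scal with Rmult in H. rewrite Hzero in H. exact H.
Qed.

(* Both sides vanish at [q = 0] and have the same derivative. *)
Lemma is_series_ln_cos_quad th q : Rabs q < 1 ->
  is_series (fun m => -2 * (cos (INR (S m) * th) / INR (S m)) * q ^ S m) (ln (cos_quad th q)).
Proof.
  intro Hq.
  set (g := fun t => ln (cos_quad th t) + 2 * PSeries (cos_coef th) t).
  assert (Hbetween : forall y, Rmin 0 q <= y <= Rmax 0 q -> Rabs y < 1).
  { intros y Hy. unfold Rmin, Rmax, Rabs in *.
    destruct (Rle_dec 0 q), (Rcase_abs y), (Rcase_abs q); lra. }
  assert (Hconst : g q = g 0).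
  { destruct (MVT_gen g 0 q (fun _ => 0)) as [c [_ Hc]].
    - intros y Hy. apply is_derive_ln_cos_quad, Hbetween. lra.
    - intros y Hy. apply continuity_pt_filterlim.
      apply (@ex_derive_continuous R_AbsRing R_NormedModule).
      eexists. apply is_derive_ln_cos_quad, Hbetween, Hy.
    - lra. }
  assert (Hg0 : g 0 = 0).
  { unfold g, cos_quad. rewrite PSeries_0, cos_coef_0.
    replace (1 - 2 * 0 * cos th + 0 ^ 2) with 1 by ring. rewrite ln_1. ring. }
  assert (Hps := PSeries_correct _ _ (CV_radius_inside _ _ (cos_coef_in_radius th q Hq))).
  refine (is_series_ext_R _ _ _ _ _ _ (is_series_Rscal (-2) _ _ (is_series_shift1 _ _ Hps))).
  - intro n. change scal with Rmult. rewrite pow_n_pow. unfold cos_coef. ring.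
  - unfold g in Hconst, Hg0. change scal with Rmult. rewrite cos_coef_0. lra.
Qed.

Lemma exp_pow_INR y n : exp y ^ n = exp (INR n * y).
Proof.
  induction n as [|n IH].
  - simpl. rewrite Rmult_0_l, exp_0. reflexivity.
  - rewrite <- tech_pow_Rmult, IH, S_INR, <- exp_plus. f_equal. ring.
Qed.

Section Regrouping.

Variables (p : nat) (eta theta : R).
Hypothesis eta_pos : 0 < eta.

Local Notation P := (Z.of_nat p).
Local Notation q := (exp (- eta)).

(* [harmonic n * coef k n] is the general term of the double sums in the statement. *)
Definition harmonic (n : Z) : R := 2 * cos (IZR n * theta) * exp (- IZR n * eta).

Definition coef (k n : Z) : R :=
  zsign (k + 1) * exp (IZR k * eta) * logpoly p k (cosh eta) / IZR (n - k).

Lemma Rabs_exp_opp_lt1 : Rabs q < 1.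
Proof.
  rewrite Rabs_right by (left; apply exp_pos).
  rewrite <- exp_0. apply exp_increasing. lra.
Qed.

Lemma ln_cosh_sub_cos :
  ln (cosh eta - cos theta) = eta - ln 2 + ln (cos_quad theta q).
Proof.
  assert (Hq := cos_quad_pos theta q Rabs_exp_opp_lt1).
  replace (cosh eta - cos theta) with (exp eta * / 2 * cos_quad theta q).
  - rewrite !ln_mult, ln_exp, ln_Rinv; try lra; try apply exp_pos.
    apply Rmult_lt_0_compat; [apply exp_pos | lra].
  - unfold cosh, cos_quad. rewrite exp_Ropp.
    field. apply Rgt_not_eq, exp_pos.
Qed.

Lemma harmonic_coef_term k m :
  harmonic (k + Z.of_nat (S m)) * coef k (k + Z.of_nat (S m)) =
  -2 * zsign k * logpoly p k (cosh eta) * q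
  * (cos (INR (S m) * theta + IZR k * theta) / INR (S m) * q ^ m).
Proof.
  unfold harmonic, coef.
  replace (k + Z.of_nat (S m) - k)%Z with (Z.of_nat (S m)) by ring.
  rewrite zsign_succ, exp_pow_INR, plus_IZR, <- INR_IZR_INZ.
  replace (- (IZR k + INR (S m)) * eta) with (- eta + INR m * - eta + - (IZR k * eta))
    by (rewrite S_INR; ring).
  rewrite !exp_plus, !exp_Ropp.
  replace ((IZR k + INR (S m)) * theta) with (INR (S m) * theta + IZR k * theta) by ring.
  field. repeat split; try apply Rgt_not_eq, exp_pos. apply not_0_INR. lia.
Qed.

Lemma ex_series_row k :
  ex_series (fun m => harmonic (k + Z.of_nat (S m)) * coef k (k + Z.of_nat (S m))).
Proof.
  destruct (ex_series_bounded_geom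
              (fun m => cos (INR (S m) * theta + IZR k * theta) / INR (S m)) q
              (fun m => Rabs_cos_div_INR _ _) Rabs_exp_opp_lt1) as [l Hl].
  exists (-2 * zsign k * logpoly p k (cosh eta) * q * l).
  refine (is_series_ext_R _ _ _ _ _ eq_refl (is_series_Rscal _ _ _ Hl)).
  intro m. symmetry. apply harmonic_coef_term.
Qed.

Lemma is_series_rows :
  is_series (fun m => zsum (- P) P (fun k =>
               harmonic (k + Z.of_nat (S m)) * coef k (k + Z.of_nat (S m))))
    ((cosh eta - cos theta) ^ p * ln (cos_quad theta q)).
Proof.
  refine (is_series_ext_R _ _ _ _ _ eq_refl
    (is_series_Rscal _ _ _ (is_series_ln_cos_quad theta q Rabs_exp_opp_lt1))).
  intro m.
  replace ((cosh eta - cos theta) ^ p * (-2 * (cos (INR (S m) * theta) / INR (S m)) * q ^ S m))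
    with (-2 * q ^ S m / INR (S m) * ((cosh eta - cos theta) ^ p * cos (INR (S m) * theta)))
    by (field; apply not_0_INR; lia).
  rewrite pow_sub_cos_mul_cos, <- zsum_scal. apply zsum_ext. intros k _.
  rewrite harmonic_coef_term. simpl pow. field. apply not_0_INR. lia.
Qed.

Lemma is_series_regrouped :
  is_series (fun m => harmonic (Z.of_nat m + P + 1) *
                      zsum (- P) P (fun k => coef k (Z.of_nat m + P + 1)))
    ((cosh eta - cos theta) ^ p * ln (cos_quad theta q)
     - zsum (- P) P (fun n => harmonic n * zsum (- P) (n - 1) (fun k => coef k n))).
Proof.
  set (row := fun k m => harmonic (k + Z.of_nat (S m)) * coef k (k + Z.of_nat (S m))).
  assert (Hrow : forall k, is_series (row k) (Series (row k)))
    by (intro k; apply Series_correct, ex_series_row).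
  assert (Hsum : zsum (- P) P (fun k => Series (row k))
                 = (cosh eta - cos theta) ^ p * ln (cos_quad theta q)).
  { rewrite <- (is_series_unique _ _ is_series_rows). symmetry.
    apply is_series_unique, is_series_zsum. intros k _. apply Hrow. }
  assert (Htail : forall k, (- P <= k <= P)%Z ->
    is_series (fun m => harmonic (P + 1 + Z.of_nat m) * coef k (P + 1 + Z.of_nat m))
              (Series (row k) - zsum (k + 1) P (fun n => harmonic n * coef k n))).
  { intros k Hk. apply (is_series_tail (fun n => harmonic n * coef k n)); [lia |].
    refine (is_series_ext_R _ _ _ _ _ eq_refl (Hrow k)).
    intro m. unfold row.
    replace (k + Z.of_nat (S m))%Z with (k + 1 + Z.of_nat m)%Z by lia. reflexivity. }
  assert (Htails := is_series_zsum _ _ _ _ Htail).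
  revert Htails; apply is_series_ext_R.
  - intro m. rewrite <- zsum_scal. apply zsum_ext. intros k _.
    replace (P + 1 + Z.of_nat m)%Z with (Z.of_nat m + P + 1)%Z by ring. reflexivity.
  - unfold Rminus. rewrite zsum_plus, zsum_opp, Hsum, zsum_triangle. f_equal. f_equal.
    apply zsum_ext. intros n _. apply zsum_scal.
Qed.

Lemma harmonic_opp n : harmonic (- n) = 2 * cos (IZR n * theta) * exp (IZR n * eta).
Proof.
  unfold harmonic. rewrite opp_IZR, Ropp_involutive.
  replace (- IZR n * theta) with (- (IZR n * theta)) by ring. rewrite cos_neg. reflexivity.
Qed.

Lemma coef_opp k n : coef k (- n) =
  - (zsign (k + 1) * exp (IZR k * eta) * logpoly p k (cosh eta) / IZR (n + k)).
Proof.
  unfold coef, Rdiv. replace (- n - k)%Z with (- (n + k))%Z by ring.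
  rewrite opp_IZR, Rinv_opp. ring.
Qed.

Lemma zsum_harmonics_split :
  zsum (- P) P (fun n => harmonic n * zsum (- P) (n - 1) (fun k => coef k n)) =
  2 * zsum 0 P (fun n =>
        cos (IZR n * theta) * exp (- IZR n * eta) *
        zsum (- P) (n - 1) (fun k => zsign (k + 1) * exp (IZR k * eta)
                                     * logpoly p k (cosh eta) / IZR (n - k)))
  - 2 * zsum 1 (P - 1) (fun n =>
        cos (IZR n * theta) * exp (IZR n * eta) *
        zsum (- P) (- n - 1) (fun k => zsign (k + 1) * exp (IZR k * eta)
                                       * logpoly p k (cosh eta) / IZR (n + k))).
Proof.
  rewrite (zsum_split (- P) (-1)), <- (zsum_reflect 1 P) by lia.
  rewrite (zsum_drop_last 1 P) by (rewrite (zsum_empty (- P)) by lia; ring).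
  replace (-1 + 1)%Z with 0%Z by ring.
  unfold Rminus. rewrite <- !zsum_scal, <- zsum_opp, Rplus_comm.
  f_equal; apply zsum_ext; intros n _.
  - unfold harmonic, coef. ring.
  - rewrite harmonic_opp, (zsum_ext _ _ _ _ (fun k _ => coef_opp k n)), zsum_opp. ring.
Qed.

End Regrouping.

Theorem mainTheorem1 (p : nat) (eta theta : R) (heta : 0 < eta) :
  let x := cosh eta in
  let P := Z.of_nat p in
  let c := cosh eta - cos theta in
  is_series
    (fun m : nat =>
       let n := (Z.of_nat m + P + 1)%Z in
       2 * cos (IZR n * theta) * exp (- IZR n * eta) *
       zsum (- P) P (fun k => zsign (k + 1) * exp (IZR k * eta)
                                * logpoly p k x / IZR (n - k)))
    (c ^ p * ln c
     - (eta - ln 2) * c ^ p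
     - 2 * zsum 0 P (fun n =>
             cos (IZR n * theta) * exp (- IZR n * eta) *
             zsum (- P) (n - 1) (fun k => zsign (k + 1) * exp (IZR k * eta)
                                          * logpoly p k x / IZR (n - k)))
     + 2 * zsum 1 (P - 1) (fun n =>
             cos (IZR n * theta) * exp (IZR n * eta) *
             zsum (- P) (- n - 1) (fun k => zsign (k + 1) * exp (IZR k * eta)
                                            * logpoly p k x / IZR (n + k)))).
Proof.
  intros x P c. subst x P c.
  refine (is_series_ext_R _ _ _ _ (fun m => eq_refl) _ (is_series_regrouped p eta theta heta)).
  rewrite zsum_harmonics_split, (ln_cosh_sub_cos eta theta heta). ring.
Qed.
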